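(* Let $d=|d|e^{i\theta}\in\mathbb{C}\setminus\{0\}$, $\xi\in\mathbb{C}$, $w_m=d(m+\xi)$ for $m=1,2,\dots$, and let $(\delta\omega_m)_{m\ge1}$ be complex numbers with $\delta\omega_m=O(m^{-\epsilon})$ for some $\epsilon>0$. Define $$\Delta(\omega)=\sum_{m=1}^{\infty}\left(\frac{1}{\omega-w_m}-\frac{1}{\omega-w_m-\delta\omega_m}\right).$$ Then for every $\varphi\in\mathbb{R}$ with $\varphi\not\equiv\theta\pmod{2\pi}$, the series converges for all sufficiently large $|\omega|$ on the ray $\arg\omega=\varphi$, and $$\lim_{r\to\infty} r\,\Delta(re^{i\varphi})=0.$$ *)

From Stdlib Require Import Reals.
From Coquelicot Require Import Coquelicot.
Open Scope R_scope.

(* Sum of a complex series (componentwise real Series; equals the true sum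
   whenever the complex series converges, cf. ex_series). *)
Definition CSeries (a : nat -> C) : C :=
  (Series (fun n => fst (a n)), Series (fun n => snd (a n))).

Definition cis (t : R) : C := (cos t, sin t).

Definition w (d xi : C) (m : nat) : C := Cmult d (Cplus (RtoC (INR m)) xi).

Definition pert_term (d xi : C) (dw : nat -> C) (om : C) (m : nat) : C :=
  Cminus (Cinv (Cminus om (w d xi m)))
         (Cinv (Cminus (Cminus om (w d xi m)) (dw m))).

(* Delta(om) = sum_{m>=1} pert_term m ; index n corresponds to m = n+1 *)
Definition pert_Delta (d xi : C) (dw : nat -> C) (om : C) : C :=
  CSeries (fun n => pert_term d xi dw om (S n)).

From Stdlib Require Import Reals Lra Lia Psatz.
From Coquelicot Require Import Coquelicot.
Open Scope R_scope.

(* The poles [w_m] lie, up to the fixed shift [d xi], on the ray of angle [theta]; a ray of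
   another angle [phi] stays uniformly away from it, so for large [r] both [r e^{i phi} - w_m]
   and [r e^{i phi} - w_m - dw_m] have modulus at least [k (r + m)]. Each term of [Delta] is
   then at most [|dw_m| / (k (r + m))^2], and [r * sum_m e_m / (r + m)^2 -> 0] for any
   nonnegative [e_m -> 0]: finitely many head terms contribute O(1/r), and a tail on which
   [e_m <= eta] is dominated by [eta] times a telescoping sum, of value at most [eta / r]. *)

Lemma is_series_telescope_inv (a : R) : 0 < a ->
  is_series (fun k => / (a + INR k) - / (a + INR k + 1)) (/ a).
Proof.
  intro Ha.
  assert (Hpart : forall n, sum_n (fun k => / (a + INR k) - / (a + INR k + 1)) n
                            = / a - / (a + INR n + 1)).
  { induction n as [|n IH].
    - rewrite sum_O. simpl. rewrite Rplus_0_r. reflexivity.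
    - rewrite sum_Sn, IH, S_INR. unfold plus; simpl.
      replace (a + (INR n + 1)) with (a + INR n + 1) by ring. ring. }
  assert (Hlim : is_lim_seq (fun n => / a - / (a + INR n + 1)) (/ a)).
  2:{ exact (is_lim_seq_ext _ _ _ (fun n => eq_sym (Hpart n)) Hlim). }
  replace (Finite (/ a)) with (Finite (/ a - 0)) by (f_equal; ring).
  apply is_lim_seq_minus'; [apply is_lim_seq_const |].
  change (Finite 0) with (Rbar_inv p_infty).
  apply is_lim_seq_inv; [| discriminate].
  apply is_lim_seq_le_p_loc with INR; [| apply is_lim_seq_INR].
  exists 0%nat. intros n _. lra.
Qed.

Definition weighted_inv_sq (e : nat -> R) (r : R) (n : nat) : R :=
  e n / (r + INR (S n)) ^ 2.

Lemma Series_weighted_inv_sq_le (e : nat -> R) (a C : R) :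
  0 < a -> (forall n, 0 <= e n <= C) ->
  ex_series (weighted_inv_sq e a) /\ Series (weighted_inv_sq e a) <= C / a.
Proof.
  intros Ha He.
  set (tele := fun k => / (a + INR k) - / (a + INR k + 1)).
  assert (Htele : is_series tele (/ a)) by exact (is_series_telescope_inv a Ha).
  assert (Hle : forall n, 0 <= weighted_inv_sq e a n <= C * tele n).
  { intro n. unfold weighted_inv_sq, tele. rewrite S_INR, <- Rplus_assoc.
    pose proof (pos_INR n). specialize (He n).
    replace (/ (a + INR n) - / (a + INR n + 1)) with (/ ((a + INR n) * (a + INR n + 1)))
      by (field; lra).
    split.
    - apply Rdiv_le_0_compat; [lra | apply pow_lt; lra].
    - unfold Rdiv. apply Rmult_le_compat; try lra.
      + left. apply Rinv_0_lt_compat, pow_lt. lra.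
      + apply Rinv_le_contravar; nra. }
  assert (Hex : ex_series (fun n => C * tele n))
    by (apply (ex_series_scal_l C tele); eexists; eauto).
  split.
  - apply (@ex_series_le R_AbsRing R_CompleteNormedModule _ (fun n => C * tele n));
      [| exact Hex].
    intro n. change norm with Rabs. rewrite Rabs_pos_eq; apply Hle.
  - eapply Rle_trans; [apply (Series_le _ _ Hle Hex) |].
    rewrite Series_scal_l, (is_series_unique _ _ Htele). right. unfold Rdiv. ring.
Qed.

Lemma weighted_inv_sq_shift (e : nat -> R) (r : R) (M k : nat) :
  weighted_inv_sq e r (M + k) = weighted_inv_sq (fun k => e (M + k)%nat) (r + INR M) k.
Proof.
  unfold weighted_inv_sq. rewrite !S_INR, plus_INR.
  f_equal. f_equal. ring.
Qed.

Lemma eventually_le_of_lim_0 (e : nat -> R) (eta : R) :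
  is_lim_seq e 0 -> 0 < eta -> exists M, forall n, (M <= n)%nat -> e n <= eta.
Proof.
  intros Hlim Heta.
  apply is_lim_seq_spec in Hlim.
  destruct (Hlim (mkposreal eta Heta)) as [M HM].
  exists M. intros n Hn. specialize (HM n Hn). simpl in HM.
  apply Rabs_lt_between in HM. lra.
Qed.

Section WeightedSeries.

Variable e : nat -> R.
Hypothesis e_ge0 : forall n, 0 <= e n.
Hypothesis e_lim0 : is_lim_seq e 0.

Lemma Series_tail_weighted_inv_sq_le (r eta : R) (M : nat) :
  0 < r -> (forall n, (M <= n)%nat -> e n <= eta) ->
  ex_series (fun k => weighted_inv_sq e r (M + k)) /\
  r * Series (fun k => weighted_inv_sq e r (M + k)) <= eta.
Proof.
  intros Hr HM.
  assert (Hle : forall k, 0 <= e (M + k)%nat <= eta)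
    by (intro k; split; [apply e_ge0 | apply HM; lia]).
  assert (HrM : r <= r + INR M) by (pose proof (pos_INR M); lra).
  destruct (Series_weighted_inv_sq_le (fun k => e (M + k)%nat) (r + INR M) eta ltac:(lra) Hle)
    as [Hex HS].
  assert (Heta : 0 <= eta) by (pose proof (Hle 0%nat); lra).
  split.
  - exact (ex_series_ext _ _ (fun k => eq_sym (weighted_inv_sq_shift e r M k)) Hex).
  - rewrite (Series_ext _ _ (weighted_inv_sq_shift e r M)).
    apply Rle_trans with (r * (eta / (r + INR M))); [apply Rmult_le_compat_l; lra |].
    apply (Rmult_le_reg_r (r + INR M)); [lra |].
    replace (r * (eta / (r + INR M)) * (r + INR M)) with (eta * r) by (field; lra).
    apply Rmult_le_compat_l; lra.
Qed.

Lemma sum_weighted_inv_sq_le (r : R) (M : nat) : 0 < r ->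
  r * sum_f_R0 (weighted_inv_sq e r) M <= sum_f_R0 e M / r.
Proof.
  intro Hr.
  apply Rle_trans with (r * (sum_f_R0 e M * / r ^ 2)); [| right; field; lra].
  apply Rmult_le_compat_l; [lra |].
  rewrite Rmult_comm, scal_sum. apply sum_Rle. intros n _.
  apply Rmult_le_compat_l; [apply e_ge0 |].
  apply Rinv_le_contravar; [apply pow_lt; lra |].
  pose proof (pos_INR (S n)). apply pow_incr. lra.
Qed.

Lemma ex_series_weighted_inv_sq (r : R) : 0 < r -> ex_series (weighted_inv_sq e r).
Proof.
  intro Hr.
  destruct (eventually_le_of_lim_0 e 1 e_lim0 Rlt_0_1) as [M HM].
  apply (ex_series_incr_n _ M).
  exact (proj1 (Series_tail_weighted_inv_sq_le r 1 M Hr HM)).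
Qed.

Lemma lim_scal_Series_weighted_inv_sq :
  filterlim (fun r => r * Series (weighted_inv_sq e r)) (Rbar_locally p_infty) (locally 0).
Proof.
  apply filterlim_locally. intros [eta Heta]. simpl.
  destruct (eventually_le_of_lim_0 e (eta / 2) e_lim0 ltac:(lra)) as [M HM].
  set (head := sum_f_R0 e M).
  exists (Rmax 1 (2 * head / eta)). intros r Hr.
  pose proof (Rmax_l 1 (2 * head / eta)). pose proof (Rmax_r 1 (2 * head / eta)).
  assert (Hr0 : 0 < r) by lra.
  set (a := weighted_inv_sq e r).
  assert (Ha0 : forall n, 0 <= a n).
  { intro n. apply Rdiv_le_0_compat; [apply e_ge0 |].
    apply pow_lt. pose proof (pos_INR (S n)). lra. }
  assert (Hex : ex_series a) by exact (ex_series_weighted_inv_sq r Hr0).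
  assert (HS0 : 0 <= Series a).
  { rewrite <- (Rmult_0_l (Series a)), <- Series_scal_l.
    apply Series_le; [intro n; rewrite Rmult_0_l; split; [lra | apply Ha0] | exact Hex]. }
  pose proof (sum_weighted_inv_sq_le r M Hr0) as Hhead.
  destruct (Series_tail_weighted_inv_sq_le r (eta / 2) (S M) Hr0
              (fun n Hn => HM n ltac:(lia))) as [_ Htail].
  assert (Hhead_small : head / r < eta / 2).
  { assert (2 * head < eta * r).
    { replace (2 * head) with (2 * head / eta * eta) by (field; lra). nra. }
    apply (Rmult_lt_reg_r r); [lra |].
    replace (head / r * r) with head by (field; lra). lra. }
  change (Rabs (r * Series a + - 0) < eta).
  rewrite Ropp_0, Rplus_0_r, Rabs_pos_eq by (apply Rmult_le_pos; lra).
  rewrite (Series_incr_n a (S M)) by (lia || exact Hex).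
  rewrite Rmult_plus_distr_l. simpl pred. unfold a. fold head in Hhead. lra.
Qed.

End WeightedSeries.

Lemma is_lim_seq_Rpower_opp (eps : R) : 0 < eps ->
  is_lim_seq (fun n => Rpower (INR n) (- eps)) 0.
Proof.
  intro Heps. unfold Rpower.
  assert (Hln : is_lim_seq (fun n => ln (INR n)) p_infty).
  { apply (is_lim_comp_seq ln INR p_infty p_infty is_lim_ln_p);
      [exists 0%nat; discriminate | apply is_lim_seq_INR]. }
  assert (Hlin : is_lim_seq (fun n => - eps * ln (INR n)) m_infty).
  { apply (is_lim_seq_ext (fun n => ln (INR n) * - eps)); [intro n; apply Rmult_comm |].
    apply (is_lim_seq_mult _ _ p_infty (- eps)); [exact Hln | apply is_lim_seq_const |].
    apply is_Rbar_mult_p_infty_neg. simpl. lra. }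
  apply (is_lim_comp_seq exp _ m_infty 0 is_lim_exp_m); [exists 0%nat; discriminate | exact Hlin].
Qed.

Lemma is_lim_seq_big_O_Rpower (u : nat -> R) (eps K N : R) :
  0 < eps -> (forall m, 0 <= u m) ->
  (forall m, (1 <= m)%nat -> N <= INR m -> u m <= K * Rpower (INR m) (- eps)) ->
  is_lim_seq (fun n => u (S n)) 0.
Proof.
  intros Heps Hu HK.
  destruct (INR_unbounded N) as [n0 Hn0].
  apply (is_lim_seq_le_le_loc (fun _ => 0) _ (fun n => K * Rpower (INR (S n)) (- eps))).
  - exists n0. intros n Hn. split; [apply Hu |]. apply HK; [lia |].
    apply le_INR in Hn. rewrite S_INR. lra.
  - apply is_lim_seq_const.
  - replace (Finite 0) with (Rbar_mult K 0) by (simpl; f_equal; ring).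
    apply is_lim_seq_scal_l.
    exact (proj1 (is_lim_seq_incr_1 _ _) (is_lim_seq_Rpower_opp eps Heps)).
Qed.

Lemma cos_sub_lt_1 (phi theta : R) :
  (forall k : Z, phi <> theta + 2 * IZR k * PI) -> cos (phi - theta) < 1.
Proof.
  intro Hk.
  destruct (Rlt_or_le (cos (phi - theta)) 1) as [Hlt | Hge]; [exact Hlt | exfalso].
  pose proof (COS_bound (phi - theta)) as [_ Hle].
  set (a := (phi - theta) / 2).
  assert (Hcos : cos (2 * a) = 1)
    by (unfold a; replace (2 * ((phi - theta) / 2)) with (phi - theta) by field; lra).
  rewrite cos_2a_sin in Hcos.
  assert (Hsin : sin a = 0) by (apply Rsqr_0_uniq; unfold Rsqr; lra).
  destruct (sin_eq_0_0 a Hsin) as [k Hak].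
  apply (Hk k). unfold a in Hak. lra.
Qed.

Lemma Cmod_ray_sub_ge (phi theta : R) : cos (phi - theta) < 1 ->
  exists c, 0 < c /\ forall t s, 0 <= t -> 0 <= s ->
    c * (t + s) <= Cmod (Cminus (Cmult (RtoC t) (cis phi)) (Cmult (RtoC s) (cis theta))).
Proof.
  intro Hcos.
  pose proof (COS_bound (phi - theta)) as [Hcos1 _].
  set (be := (1 - cos (phi - theta)) / 2).
  assert (Hbe : 0 < be <= 1) by (unfold be; lra).
  exists (sqrt be). split; [apply sqrt_lt_R0; lra |].
  intros t s Ht Hs.
  assert (Hsq : forall x, cos x ^ 2 + sin x ^ 2 = 1)
    by (intro x; rewrite <- (sin2_cos2 x); unfold Rsqr; ring).
  assert (Hmod2 : Rsqr (Cmod (Cminus (Cmult (RtoC t) (cis phi)) (Cmult (RtoC s) (cis theta))))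
                  = be * (t + s) ^ 2 + (1 - be) * (t - s) ^ 2).
  { unfold Cmod. rewrite Rsqr_sqrt by (apply Rplus_le_le_0_compat; apply pow2_ge_0).
    unfold be. rewrite cos_minus.
    simpl. pose proof (Hsq phi). pose proof (Hsq theta). nra. }
  apply Rsqr_incr_0_var; [| apply Cmod_ge_0].
  rewrite Hmod2, Rsqr_mult, Rsqr_sqrt, Rsqr_pow2 by lra.
  assert (0 <= (1 - be) * (t - s) ^ 2) by (apply Rmult_le_pos; [lra | apply pow2_ge_0]).
  lra.
Qed.

Lemma Cmod_sub_ge (x y : C) : Cmod x - Cmod y <= Cmod (Cminus x y).
Proof.
  pose proof (Cmod_triangle (Cminus x y) y) as H.
  replace (Cplus (Cminus x y) y) with x in H by (apply injective_projections; simpl; ring).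
  lra.
Qed.

Lemma Cmod_Cinv_sub_Cinv_le (a dl : C) (L : R) :
  0 < L -> L <= Cmod a -> L <= Cmod (Cminus a dl) ->
  Cmod (Cminus (Cinv a) (Cinv (Cminus a dl))) <= Cmod dl / L ^ 2.
Proof.
  intros HL Ha Hadl.
  assert (Ha0 : a <> RtoC 0) by (apply Cmod_gt_0; lra).
  assert (Hadl0 : Cminus a dl <> RtoC 0) by (apply Cmod_gt_0; lra).
  replace (Cminus (Cinv a) (Cinv (Cminus a dl)))
    with (Cmult (Copp dl) (Cmult (Cinv a) (Cinv (Cminus a dl)))) by (field; split; auto).
  rewrite !Cmod_mult, Cmod_opp, !Cmod_inv by auto.
  unfold Rdiv. apply Rmult_le_compat_l; [apply Cmod_ge_0 |].
  simpl. rewrite Rmult_1_r, Rinv_mult.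
  apply Rmult_le_compat; try (left; apply Rinv_0_lt_compat; lra);
    apply Rinv_le_contravar; lra.
Qed.

Section Ray.

Variables (d xi : C) (theta phi : R) (dw : nat -> C) (c B : R).
Hypothesis d_neq0 : d <> RtoC 0.
Hypothesis d_polar : d = Cmult (RtoC (Cmod d)) (cis theta).
Hypothesis c_gt0 : 0 < c.
Hypothesis ray_sep : forall t s, 0 <= t -> 0 <= s ->
  c * (t + s) <= Cmod (Cminus (Cmult (RtoC t) (cis phi)) (Cmult (RtoC s) (cis theta))).
Hypothesis dw_le : forall n, Cmod (dw (S n)) <= B.

Lemma Cmod_ray_sub_w_ge (r : R) (m : nat) : 0 <= r ->
  c * (r + Cmod d * INR m) - Cmod (Cmult d xi)
    <= Cmod (Cminus (Cmult (RtoC r) (cis phi)) (w d xi m)).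
Proof.
  intro Hr.
  assert (Hw : w d xi m = Cplus (Cmult (RtoC (Cmod d * INR m)) (cis theta)) (Cmult d xi)).
  { generalize d_polar. generalize (Cmod d) (cis theta). intros md v ->.
    unfold w. apply injective_projections; simpl; ring. }
  replace (Cminus (Cmult (RtoC r) (cis phi)) (w d xi m))
    with (Cminus (Cminus (Cmult (RtoC r) (cis phi)) (Cmult (RtoC (Cmod d * INR m)) (cis theta)))
                 (Cmult d xi))
    by (rewrite Hw; apply injective_projections; simpl; ring).
  pose proof (ray_sep r (Cmod d * INR m) Hr
                (Rmult_le_pos _ _ (Cmod_ge_0 d) (pos_INR m))).
  pose proof (Cmod_sub_ge
    (Cminus (Cmult (RtoC r) (cis phi)) (Cmult (RtoC (Cmod d * INR m)) (cis theta)))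
    (Cmult d xi)).
  lra.
Qed.

Lemma Cmod_pert_term_ray_le :
  exists k R0, 0 < k /\ forall r, R0 < r -> forall n,
    Cmod (pert_term d xi dw (Cmult (RtoC r) (cis phi)) (S n))
      <= weighted_inv_sq (fun n => Cmod (dw (S n)) / k ^ 2) r n.
Proof.
  assert (Hd : 0 < Cmod d) by (apply Cmod_gt_0; exact d_neq0).
  set (A := Cmod (Cmult d xi) + B).
  set (k := c / 2 * Rmin 1 (Cmod d)).
  assert (Hmin : 0 < Rmin 1 (Cmod d)) by (apply Rmin_glb_lt; lra).
  exists k, (2 * A / c). split; [unfold k; apply Rmult_lt_0_compat; lra |].
  intros r Hr n.
  assert (HB : 0 <= B) by (apply Rle_trans with (Cmod (dw 1%nat)); [apply Cmod_ge_0 | apply dw_le]).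
  assert (HA : 0 <= A) by (unfold A; pose proof (Cmod_ge_0 (Cmult d xi)); lra).
  assert (Hr0 : 0 <= r) by (assert (0 <= 2 * A / c) by (apply Rdiv_le_0_compat; lra); lra).
  assert (HcA : 2 * A <= c * r)
    by (replace (2 * A) with (2 * A / c * c) by (field; lra); nra).
  set (m := S n).
  assert (Hm1 : 1 <= INR m) by (unfold m; rewrite S_INR; pose proof (pos_INR n); lra).
  assert (Hkm : k * (r + INR m) <= c * (r + Cmod d * INR m) - A).
  { unfold k. pose proof (Rmin_l 1 (Cmod d)). pose proof (Rmin_r 1 (Cmod d)).
    assert (c / 2 * Rmin 1 (Cmod d) * r <= c / 2 * r)
      by (apply Rmult_le_compat_r; [lra |]; rewrite <- (Rmult_1_r (c / 2)) at 2;
          apply Rmult_le_compat_l; lra).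
    assert (c / 2 * Rmin 1 (Cmod d) * INR m <= c / 2 * Cmod d * INR m)
      by (apply Rmult_le_compat_r; [lra |]; apply Rmult_le_compat_l; lra).
    assert (0 <= c / 2 * Cmod d * INR m)
      by (apply Rmult_le_pos; [apply Rmult_le_pos |]; lra).
    lra. }
  assert (Hk : 0 < k) by (unfold k; apply Rmult_lt_0_compat; lra).
  assert (HkL : 0 < k * (r + INR m)) by (apply Rmult_lt_0_compat; lra).
  pose proof (Cmod_ray_sub_w_ge r m Hr0) as Hdist.
  pose proof (Cmod_sub_ge (Cminus (Cmult (RtoC r) (cis phi)) (w d xi m)) (dw m)) as Hdist'.
  pose proof (dw_le n) as Hdwm. fold m in Hdwm.
  unfold pert_term, weighted_inv_sq. fold m.
  replace (Cmod (dw m) / k ^ 2 / (r + INR m) ^ 2) with (Cmod (dw m) / (k * (r + INR m)) ^ 2)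
    by (field; split; lra).
  apply Cmod_Cinv_sub_Cinv_le; unfold A in *; lra.
Qed.

End Ray.

Lemma Rmax_Rabs_CSeries_le (a : nat -> C) (b : nat -> R) :
  (forall n, Cmod (a n) <= b n) -> ex_series b ->
  Rmax (Rabs (fst (CSeries a))) (Rabs (snd (CSeries a))) <= Series b.
Proof.
  intros Hab Hb.
  assert (Hpart : forall g : C -> R, (forall z, Rabs (g z) <= Cmod z) ->
                  Rabs (Series (fun n => g (a n))) <= Series b).
  { intros g Hg.
    assert (Hle : forall n, 0 <= Rabs (g (a n)) <= b n)
      by (intro n; split; [apply Rabs_pos | eapply Rle_trans; [apply Hg | apply Hab]]).
    eapply Rle_trans; [apply Series_Rabs | apply (Series_le _ _ Hle Hb)].
    apply (@ex_series_le R_AbsRing R_CompleteNormedModule _ b); [| exact Hb].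
    intro n. change norm with Rabs. rewrite Rabs_Rabsolu. apply Hle. }
  apply Rmax_lub; apply Hpart; intro z.
  - exact (Rle_trans _ _ _ (Rmax_l _ _) (Rmax_Cmod z)).
  - exact (Rle_trans _ _ _ (Rmax_r _ _) (Rmax_Cmod z)).
Qed.

Lemma filterlim_scal_CSeries_0 (a : R -> nat -> C) (b : R -> nat -> R) (R0 : R) :
  (forall r, R0 < r -> ex_series (b r) /\ forall n, Cmod (a r n) <= b r n) ->
  filterlim (fun r => r * Series (b r)) (Rbar_locally p_infty) (locally 0) ->
  filterlim (fun r => Cmult (RtoC r) (CSeries (a r))) (Rbar_locally p_infty) (locally (RtoC 0)).
Proof.
  intros Hab Hlim.
  apply filterlim_locally. intro eta.
  apply (proj1 (filterlim_locally _ _)) with (eps := eta) in Hlim.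
  assert (Hfar : Rbar_locally p_infty (fun r => Rmax R0 0 < r)) by (exists (Rmax R0 0); auto).
  generalize (filter_and _ _ Hlim Hfar). apply filter_imp.
  intros r [Hball Hr].
  pose proof (Rmax_l R0 0). pose proof (Rmax_r R0 0).
  destruct (Hab r ltac:(lra)) as [Hex Hle].
  pose proof (Rmax_Rabs_CSeries_le (a r) (b r) Hle Hex) as Hmax.
  pose proof (Rmax_l (Rabs (fst (CSeries (a r)))) (Rabs (snd (CSeries (a r))))).
  pose proof (Rmax_r (Rabs (fst (CSeries (a r)))) (Rabs (snd (CSeries (a r))))).
  change (Rabs (r * Series (b r) + - 0) < eta) in Hball.
  rewrite Ropp_0, Rplus_0_r in Hball.
  destruct (CSeries (a r)) as [x y]. simpl in *.
  assert (Hrb : r * Series (b r) < eta) by (eapply Rle_lt_trans; [apply Rle_abs | exact Hball]).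
  split.
  - change (Rabs (r * x - 0 * y + - 0) < eta).
    replace (r * x - 0 * y + - 0) with (r * x) by ring.
    rewrite Rabs_mult, (Rabs_pos_eq r) by lra. nra.
  - change (Rabs (r * y + 0 * x + - 0) < eta).
    replace (r * y + 0 * x + - 0) with (r * y) by ring.
    rewrite Rabs_mult, (Rabs_pos_eq r) by lra. nra.
Qed.

Theorem mainTheorem7 (d xi : C) (theta : R) (dw : nat -> C) (eps : R) :
  d <> RtoC 0 ->
  d = Cmult (RtoC (Cmod d)) (cis theta) ->
  0 < eps ->
  (exists K N : R, forall m : nat, (1 <= m)%nat -> N <= INR m ->
      Cmod (dw m) <= K * Rpower (INR m) (- eps)) ->
  forall phi : R,
    (forall k : Z, phi <> theta + 2 * IZR k * PI) ->
    (exists R0 : R, forall r : R, R0 < r ->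
        ex_series (fun n => pert_term d xi dw (Cmult (RtoC r) (cis phi)) (S n)))
    /\
    filterlim (fun r : R => Cmult (RtoC r) (pert_Delta d xi dw (Cmult (RtoC r) (cis phi))))
      (Rbar_locally p_infty) (locally (RtoC 0)).
Proof.
  intros Hd0 Hpolar Heps [K [N HKN]] phi Hphi.
  assert (Hdw0 : is_lim_seq (fun n => Cmod (dw (S n))) 0)
    by exact (is_lim_seq_big_O_Rpower _ eps K N Heps (fun m => Cmod_ge_0 _) HKN).
  destruct (filterlim_bounded _ (ex_intro _ 0 Hdw0)) as [B HB].
  destruct (Cmod_ray_sub_ge phi theta (cos_sub_lt_1 phi theta Hphi)) as [c [Hc Hsep]].
  destruct (Cmod_pert_term_ray_le d xi theta phi dw c B Hd0 Hpolar Hc Hsep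
              (fun n => Rle_trans _ _ _ (Rle_abs _) (HB n))) as [k [R0 [Hk Hterm]]].
  set (e := fun n => Cmod (dw (S n)) / k ^ 2).
  assert (He0 : forall n, 0 <= e n)
    by (intro n; apply Rdiv_le_0_compat; [apply Cmod_ge_0 | apply pow_lt; lra]).
  assert (He : is_lim_seq e 0).
  { replace (Finite 0) with (Rbar_mult (/ k ^ 2) 0) by (simpl; f_equal; ring).
    apply (is_lim_seq_ext (fun n => / k ^ 2 * Cmod (dw (S n)))); [intro n; unfold e, Rdiv; ring |].
    apply is_lim_seq_scal_l, Hdw0. }
  assert (Hdom : forall r, Rmax R0 0 < r ->
            ex_series (weighted_inv_sq e r) /\
            forall n, Cmod (pert_term d xi dw (Cmult (RtoC r) (cis phi)) (S n))
                      <= weighted_inv_sq e r n).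
  { intros r Hr. pose proof (Rmax_l R0 0). pose proof (Rmax_r R0 0).
    split; [apply ex_series_weighted_inv_sq; auto; lra | apply Hterm; lra]. }
  split.
  - exists (Rmax R0 0). intros r Hr. destruct (Hdom r Hr) as [Hex Hle].
    exact (@ex_series_le C_AbsRing C_CompleteNormedModule _ _ Hle Hex).
  - exact (filterlim_scal_CSeries_0
             (fun r n => pert_term d xi dw (Cmult (RtoC r) (cis phi)) (S n)) _ _ Hdom
             (lim_scal_Series_weighted_inv_sq e He0 He)).
Qed.
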